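(* Let $k\ge 2$ and $\Delta\ge 2$ be integers and $f(z)=\frac{(1-z^{k-1})^{\Delta-1}}{1+(1-z^{k-1})^{\Delta-1}}$ for $z\in[0,1]$. Then $f$ is strictly decreasing on $[0,1]$, and there is a unique $x\in[0,1]$ with $f(x)=x$; this $x$ satisfies $|f'(x)|=\frac{(\Delta-1)(k-1)x^{k-1}(1-x)}{1-x^{k-1}}$. Finally, if $|f'(x)|<1$, then the equation $f(f(z))=z$ for $z\in[0,1]$ is satisfied only by $z=x$. *)

From Stdlib Require Import Reals.
From Coquelicot Require Import Coquelicot.
Open Scope R_scope.

Definition f56 (k Delta : nat) (z : R) : R :=
  (1 - z ^ (k - 1)) ^ (Delta - 1) / (1 + (1 - z ^ (k - 1)) ^ (Delta - 1)).

(** Write [f := phi m D] with [m = k - 1], [D = Delta - 1].  As [f] is decreasing, [psi := f o f - id]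
    vanishes at the fixed point [x], and if [psi'] is negative at every zero of [psi] then [psi] can
    cross zero only once.  At a zero [z] with [w = f z] we have [psi'(z) = f'(z) f'(w) - 1] and
    [f'(z) f'(w) = slope z * slope w], while [|f'(x)| = slope x].  Now [logit_gap t = logit t - logit (f t)]
    sums to zero along the cycle and vanishes at [x]; taking [p, q] so that [p ln slope - q logit_gap]
    is critical at [x], it is in fact maximal at [x], because [t ^ m / (1 + t + ... + t ^ (m - 1))] is
    increasing and 1-Lipschitz on [0, 1).  Adding the inequalities at [z] and [w] gives
    [slope z * slope w <= slope x ^ 2 < 1]. *)

From Stdlib Require Import Reals Lra Lia Ranalysis5.
From Coquelicot Require Import Coquelicot.
Open Scope R_scope.

Lemma pow_unit_interval n t : 0 <= t <= 1 -> 0 <= t ^ n <= 1.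
Proof.
  intros Ht. split; [apply pow_le; lra|].
  rewrite <- (pow1 n). apply pow_incr. lra.
Qed.

Lemma pow_lt_pow_base n a b : 0 <= a < b -> (0 < n)%nat -> a ^ n < b ^ n.
Proof.
  intros Hab Hn. destruct n as [|n]; [lia|]. clear Hn.
  induction n as [|n IH]; [simpl; lra|].
  change (a * a ^ S n < b * b ^ S n).
  assert (0 <= a ^ S n) by (apply pow_le; lra). nra.
Qed.

Lemma one_sub_pow_pos n t : 0 <= t < 1 -> (0 < n)%nat -> 0 < 1 - t ^ n.
Proof. intros Ht Hn. destruct (pow_lt_1_compat t n Ht Hn). lra. Qed.

Lemma one_sub_pow_le n t : 0 <= t <= 1 -> 1 - t ^ n <= INR n * (1 - t).
Proof.
  intros Ht. induction n as [|n IH]; [simpl; lra|].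
  rewrite S_INR. destruct (pow_unit_interval n t Ht).
  replace (1 - t ^ S n) with (1 - t ^ n + t ^ n * (1 - t)) by (simpl; ring). nra.
Qed.

Lemma one_sub_pow_ge n t : 0 <= t <= 1 -> INR (S n) * t ^ n * (1 - t) <= 1 - t ^ S n.
Proof.
  intros Ht. induction n as [|n IH]; [simpl; lra|].
  rewrite S_INR. destruct (pow_unit_interval n t Ht).
  replace (1 - t ^ S (S n)) with (1 - t ^ S n + t ^ S n * (1 - t)) by (simpl; ring).
  assert (t ^ S n <= t ^ n) by (simpl; nra).
  assert (0 <= INR (S n)) by apply pos_INR.
  assert (INR (S n) * t ^ S n * (1 - t) <= INR (S n) * t ^ n * (1 - t)).
  { apply Rmult_le_compat_r; [lra|]. apply Rmult_le_compat_l; lra. }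
  lra.
Qed.

Lemma div_one_plus_lt a b : 0 <= a < b -> a / (1 + a) < b / (1 + b).
Proof.
  intros Hab. apply Rmult_lt_reg_r with ((1 + a) * (1 + b)); [nra|].
  replace (a / (1 + a) * ((1 + a) * (1 + b))) with (a * (1 + b)) by (field; lra).
  replace (b / (1 + b) * ((1 + a) * (1 + b))) with (b * (1 + a)) by (field; lra).
  lra.
Qed.

Lemma pow_pred n t : (0 < n)%nat -> t ^ n = t * t ^ pred n.
Proof. intros Hn. destruct n as [|n]; [lia | reflexivity]. Qed.

Lemma max_of_derive_sign (h h' : R -> R) (lo hi x : R) : lo < x < hi ->
  (forall c, lo < c < hi -> derivable_pt_lim h c (h' c)) ->
  (forall c, lo < c <= x -> 0 <= h' c) ->
  (forall c, x <= c < hi -> h' c <= 0) ->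
  forall t, lo < t < hi -> h t <= h x.
Proof.
  intros Hx Hd Hinc Hdec t Ht.
  destruct (Rtotal_order t x) as [Hlt | [-> | Hgt]]; [| lra |].
  - destruct (MVT_cor2 h h' t x Hlt) as [c [Hc Hcr]]; [intros c Hc; apply Hd; lra|].
    assert (0 <= h' c * (x - t)) by (apply Rmult_le_pos; [apply Hinc|]; lra). lra.
  - destruct (MVT_cor2 h h' x t Hgt) as [c [Hc Hcr]]; [intros c Hc; apply Hd; lra|].
    assert (h' c * (t - x) <= 0) by (apply Rmult_le_0_r; [apply Hdec|]; lra). lra.
Qed.

Lemma continuity_pt_lt_nbhd (psi : R -> R) c y : continuity_pt psi c -> psi c < y ->
  exists del, 0 < del /\ forall s, Rabs (s - c) < del -> psi s < y.
Proof.
  intros Hc Hy. destruct (Hc (y - psi c) ltac:(lra)) as [del [Hdel Hnear]].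
  exists del. split; [exact Hdel|]. intros s Hs.
  destruct (Req_dec s c) as [-> | Hne]; [exact Hy|].
  assert (H := Hnear s (conj (conj I (not_eq_sym Hne)) Hs)).
  unfold R_dist in H. apply Rabs_def2 in H. lra.
Qed.

Lemma derive_neg_at_zero (psi : R -> R) y l : l < 0 -> derivable_pt_lim psi y l -> psi y = 0 ->
  exists del, 0 < del /\ forall h, 0 < h < del -> psi (y + h) < 0 < psi (y - h).
Proof.
  intros Hl Hd Hy. destruct (Hd (- l / 2) ltac:(lra)) as [del Hdel].
  exists del. split; [apply cond_pos|]. intros h Hh.
  assert (Hr := Hdel h ltac:(lra) ltac:(rewrite Rabs_pos_eq; lra)).
  assert (Hle := Hdel (- h) ltac:(lra) ltac:(rewrite Rabs_Ropp, Rabs_pos_eq; lra)).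
  rewrite Hy, Rminus_0_r in Hr, Hle. replace (y + - h) with (y - h) in Hle by ring.
  apply Rabs_def2 in Hr. apply Rabs_def2 in Hle.
  assert (psi (y + h) / h < 0) by lra. assert (psi (y - h) / - h < 0) by lra.
  replace (psi (y + h)) with (psi (y + h) / h * h) by (field; lra).
  replace (psi (y - h)) with (psi (y - h) / - h * - h) by (field; lra).
  split; nra.
Qed.

Lemma first_zero_after (psi : R -> R) p q : p <= q ->
  (forall t, p <= t <= q -> continuity_pt psi t) -> psi p < 0 -> 0 <= psi q ->
  exists c, p < c <= q /\ psi c = 0 /\ forall s, p <= s < c -> psi s < 0.
Proof.
  intros Hpq Hc Hp Hq.
  set (T := fun t => p <= t <= q /\ forall s, p <= s <= t -> psi s < 0).
  assert (Tp : T p) by (split; [lra | intros s Hs; replace s with p by lra; exact Hp]).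
  destruct (completeness T) as [c [Hub Hlub]];
    [exists q; intros t [Ht _]; lra | exists p; exact Tp |].
  assert (Hpc : p <= c) by (apply Hub, Tp).
  assert (Hcq : c <= q) by (apply Hlub; intros t [Ht _]; lra).
  assert (Hneg : forall s, p <= s < c -> psi s < 0).
  { intros s Hs. destruct (Rlt_or_le (psi s) 0) as [Hs' | Hs']; [exact Hs' | exfalso].
    assert (c <= s); [|lra]. apply Hlub. intros t [Ht Hts].
    destruct (Rle_or_lt t s) as [Hts' | Hst]; [exact Hts'|].
    assert (psi s < 0) by (apply Hts; lra). lra. }
  assert (Hc0 : 0 <= psi c).
  { destruct (Rle_or_lt 0 (psi c)) as [H | Hc0]; [exact H | exfalso].
    assert (Hcq' : c < q) by (destruct (Req_dec c q) as [-> |]; lra).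
    destruct (continuity_pt_lt_nbhd psi c 0 (Hc c ltac:(lra)) Hc0) as [e [He Hnear]].
    set (t := Rmin (c + e / 2) q).
    assert (Ht1 : t <= c + e / 2) by apply Rmin_l. assert (Ht2 : t <= q) by apply Rmin_r.
    assert (Hct : c < t) by (unfold t; apply Rmin_case; lra).
    assert (t <= c); [|lra]. apply Hub. split; [lra|].
    intros s Hs. destruct (Rlt_or_le s c); [apply Hneg; lra|].
    apply Hnear. rewrite Rabs_pos_eq; lra. }
  assert (Hpc' : p < c) by (destruct (Req_dec p c) as [<- |]; lra).
  assert (Hc0' : psi c <= 0).
  { destruct (Rle_or_lt (psi c) 0) as [H | Hc0']; [exact H | exfalso].
    destruct (continuity_pt_lt_nbhd (fun s => - psi s) c 0
      (continuity_pt_opp _ _ (Hc c ltac:(lra))) ltac:(lra)) as [e [He Hnear]].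
    set (s := Rmax p (c - e / 2)).
    assert (Hs1 : p <= s) by apply Rmax_l. assert (Hs2 : c - e / 2 <= s) by apply Rmax_r.
    assert (Hs3 : s < c) by (unfold s; apply Rmax_case; lra).
    assert (psi s < 0) by (apply Hneg; lra).
    assert (- psi s < 0) by (apply Hnear; rewrite Rabs_left; lra). lra. }
  exists c. repeat split; auto; lra.
Qed.

Lemma zero_unique_of_derive_neg (psi : R -> R) lo hi :
  (forall t, lo <= t <= hi -> continuity_pt psi t) ->
  (forall y, lo <= y <= hi -> psi y = 0 -> exists l, l < 0 /\ derivable_pt_lim psi y l) ->
  forall y1 y2, lo <= y1 <= hi -> lo <= y2 <= hi -> psi y1 = 0 -> psi y2 = 0 -> y1 = y2.
Proof.
  intros Hc Hd.
  (* psi leaves the zero y1 downwards and would have to reach its next zero from above *)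
  assert (Hlt : forall y1 y2, lo <= y1 -> y1 < y2 -> y2 <= hi -> psi y1 = 0 -> psi y2 = 0 -> False).
  { intros y1 y2 H1 H12 H2 Z1 Z2.
    destruct (Hd y1 ltac:(lra) Z1) as [l1 [Hl1 D1]].
    destruct (derive_neg_at_zero psi y1 l1 Hl1 D1 Z1) as [d1 [Hd1 S1]].
    set (h1 := Rmin (d1 / 2) ((y2 - y1) / 2)).
    assert (Hh1 : 0 < h1) by (unfold h1; apply Rmin_case; lra).
    assert (h1 <= d1 / 2) by apply Rmin_l. assert (h1 <= (y2 - y1) / 2) by apply Rmin_r.
    destruct (S1 h1 ltac:(lra)) as [Hp _].
    destruct (first_zero_after psi (y1 + h1) y2) as [c [Hc1 [Zc Hbelow]]];
      [lra | intros t Ht; apply Hc; lra | exact Hp | lra |].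
    destruct (Hd c ltac:(lra) Zc) as [l [Hl Dc]].
    destruct (derive_neg_at_zero psi c l Hl Dc Zc) as [d [Hd0 S2]].
    set (h := Rmin (d / 2) ((c - (y1 + h1)) / 2)).
    assert (Hh : 0 < h) by (unfold h; apply Rmin_case; lra).
    assert (h <= d / 2) by apply Rmin_l. assert (h <= (c - (y1 + h1)) / 2) by apply Rmin_r.
    destruct (S2 h ltac:(lra)) as [_ Hpos].
    assert (psi (c - h) < 0) by (apply Hbelow; lra). lra. }
  intros y1 y2 Hy1 Hy2 Z1 Z2.
  destruct (Rtotal_order y1 y2) as [H | [H | H]]; [exfalso | exact H | exfalso].
  - exact (Hlt y1 y2 ltac:(lra) H ltac:(lra) Z1 Z2).
  - exact (Hlt y2 y1 ltac:(lra) H ltac:(lra) Z2 Z1).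
Qed.

Definition odds (m D : nat) (t : R) : R := (1 - t ^ m) ^ D.
Definition phi (m D : nat) (t : R) : R := odds m D t / (1 + odds m D t).

Definition slope (m D : nat) (t : R) : R := INR D * INR m * t ^ m * (1 - t) / (1 - t ^ m).

(* [geo m t = t ^ m / (1 + t + ... + t ^ (m - 1))] for [t < 1]. *)
Definition geo (m : nat) (t : R) : R := t ^ m * (1 - t) / (1 - t ^ m).
Definition dgeo (m : nat) (t : R) : R :=
  t ^ pred m * (INR m * (1 - t) - t * (1 - t ^ m)) / (1 - t ^ m) ^ 2.

Definition logit (t : R) : R := ln t - ln (1 - t).
Definition logit_gap (m D : nat) (t : R) : R := logit t - INR D * ln (1 - t ^ m).
Definition potential (m D : nat) (p q t : R) : R :=
  p * ln (slope m D t) - q * logit_gap m D t.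

(* [t (1 - t)] times the derivatives of [ln (slope m D t)] and of [logit_gap m D t]. *)
Definition dlog_slope (m : nat) (t : R) : R := INR m * (1 - t) - t + INR m * geo m t.
Definition dlogit_gap (m D : nat) (t : R) : R := 1 + INR D * INR m * geo m t.

Section PhiMap.
Variables m D : nat.
Hypothesis m_pos : (0 < m)%nat.
Hypothesis D_pos : (0 < D)%nat.
Local Notation f := (phi m D).
Local Notation g := (odds m D).

Lemma odds_range t : 0 <= t <= 1 -> 0 <= g t <= 1.
Proof.
  intros Ht. apply pow_unit_interval. destruct (pow_unit_interval m t Ht). lra.
Qed.

Lemma odds_pos t : 0 <= t < 1 -> 0 < g t.
Proof. intros Ht. apply pow_lt, one_sub_pow_pos; auto. Qed.

Lemma odds_decr s t : 0 <= s -> s < t -> t <= 1 -> g t < g s.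
Proof.
  intros Hs Hst Ht. apply pow_lt_pow_base; auto.
  destruct (pow_unit_interval m t) as [_ Htm]; [lra|].
  assert (s ^ m < t ^ m) by (apply pow_lt_pow_base; auto; lra). lra.
Qed.

Lemma phi_decr s t : 0 <= s -> s < t -> t <= 1 -> f t < f s.
Proof.
  intros Hs Hst Ht. apply div_one_plus_lt.
  split; [apply odds_range; lra | apply odds_decr; auto].
Qed.

Lemma phi_range t : 0 <= t <= 1 -> 0 <= f t <= 1/2.
Proof.
  intros Ht. destruct (odds_range t Ht). unfold phi.
  split; [apply Rdiv_le_0_compat; lra|].
  apply Rmult_le_reg_r with (1 + g t); [lra|].
  replace (g t / (1 + g t) * (1 + g t)) with (g t) by (field; lra). lra.
Qed.

Lemma phi_pos t : 0 <= t < 1 -> 0 < f t.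
Proof. intros Ht. assert (H := odds_pos t Ht). apply Rdiv_lt_0_compat; lra. Qed.

Lemma phi_0 : f 0 = 1/2.
Proof. unfold phi, odds. rewrite pow_i, Rminus_0_r, pow1 by lia. field. Qed.

Lemma phi_1 : f 1 = 0.
Proof. unfold phi, odds. rewrite pow1, Rminus_eq_0, pow_i by lia. field. Qed.

Lemma is_derive_phi t : 0 <= t <= 1 ->
  is_derive f t (- INR D * INR m * t ^ pred m * (1 - t ^ m) ^ pred D / (1 + g t) ^ 2).
Proof.
  intros Ht. destruct (odds_range t Ht). unfold phi, odds in *. auto_derive.
  - unfold Rminus in *. lra.
  - unfold Rminus in *. field. lra.
Qed.

Lemma ex_derive_phi t : 0 <= t <= 1 -> ex_derive f t.
Proof. intros Ht. eexists. exact (is_derive_phi t Ht). Qed.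

Lemma continuity_pt_phi t : 0 <= t <= 1 -> continuity_pt f t.
Proof.
  intros Ht. apply derivable_continuous_pt. eexists.
  apply is_derive_Reals, (is_derive_phi t Ht).
Qed.

(* Multiplying by [t] removes the power [t ^ (m - 1)]. *)
Lemma Derive_phi_mul t : 0 <= t < 1 ->
  t * Derive f t * (1 - t ^ m) = - INR D * INR m * t ^ m * (f t * (1 - f t)).
Proof.
  intros Ht. rewrite (is_derive_unique _ _ _ (is_derive_phi t ltac:(lra))).
  assert (Hg := odds_pos t Ht). unfold phi, odds in *.
  rewrite (pow_pred D (1 - t ^ m) D_pos) in *. rewrite (pow_pred m t m_pos) in *.
  field. lra.
Qed.

Lemma phi_fixed_exists : {x | 0 <= x <= 1 /\ f x = x}.
Proof.
  destruct (IVT_interv (fun t => t - f t) 0 1) as [x [Hx Hfx]].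
  - intros t Ht. apply continuity_pt_minus; [apply continuity_pt_id | apply continuity_pt_phi; auto].
  - lra.
  - rewrite phi_0. lra.
  - rewrite phi_1. lra.
  - exists x. split; [auto | lra].
Qed.

Lemma phi_fixed_unique x y : 0 <= x <= 1 -> 0 <= y <= 1 -> f x = x -> f y = y -> y = x.
Proof.
  intros Hx Hy Hfx Hfy. destruct (Rtotal_order y x) as [Hlt | [Heq | Hgt]]; auto.
  - assert (f x < f y) by (apply phi_decr; lra). lra.
  - assert (f y < f x) by (apply phi_decr; lra). lra.
Qed.

Lemma phi_fixed_bounds x : 0 <= x <= 1 -> f x = x -> 0 < x <= 1/2.
Proof.
  intros Hx Hfx. assert (H := phi_range x Hx).
  destruct (Req_dec x 0) as [E | E]; [|lra].
  rewrite E, phi_0 in Hfx. lra.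
Qed.

Lemma slope_pos t : 0 < t < 1 -> 0 < slope m D t.
Proof.
  intros Ht. unfold slope. assert (Hq := one_sub_pow_pos m t ltac:(lra) m_pos).
  assert (0 < INR D) by (apply lt_0_INR; lia).
  assert (0 < INR m) by (apply lt_0_INR; lia).
  assert (0 < t ^ m) by (apply pow_lt; lra).
  apply Rdiv_lt_0_compat; [|lra].
  apply Rmult_lt_0_compat; [|lra]. apply Rmult_lt_0_compat; [nra | lra].
Qed.

Lemma Derive_phi_fixed x : 0 < x < 1 -> f x = x -> Derive f x = - slope m D x.
Proof.
  intros Hx Hfx. assert (E := Derive_phi_mul x ltac:(lra)). rewrite Hfx in E.
  assert (Hq := one_sub_pow_pos m x ltac:(lra) m_pos).
  replace (Derive f x) with (x * Derive f x * (1 - x ^ m) / (x * (1 - x ^ m))) by (field; lra).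
  rewrite E. unfold slope. field. lra.
Qed.

Lemma Derive_phi_cycle z w : 0 < z < 1 -> 0 < w < 1 -> f z = w -> f w = z ->
  Derive f z * Derive f w = slope m D z * slope m D w.
Proof.
  intros Hz Hw Hzw Hwz.
  assert (Ez := Derive_phi_mul z ltac:(lra)). assert (Ew := Derive_phi_mul w ltac:(lra)).
  rewrite Hzw in Ez. rewrite Hwz in Ew.
  assert (Hqz := one_sub_pow_pos m z ltac:(lra) m_pos).
  assert (Hqw := one_sub_pow_pos m w ltac:(lra) m_pos).
  replace (Derive f z) with (z * Derive f z * (1 - z ^ m) / (z * (1 - z ^ m))) by (field; lra).
  replace (Derive f w) with (w * Derive f w * (1 - w ^ m) / (w * (1 - w ^ m))) by (field; lra).
  rewrite Ez, Ew. unfold slope. field. lra.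
Qed.

Lemma is_derive_geo t : 0 <= t < 1 -> is_derive (geo m) t (dgeo m t).
Proof.
  intros Ht. assert (Hq := one_sub_pow_pos m t Ht m_pos). unfold geo, dgeo.
  auto_derive.
  - unfold Rminus in Hq. lra.
  - rewrite (pow_pred m t m_pos) in *. field. lra.
Qed.

Lemma dgeo_bounds t : 0 <= t < 1 -> 0 <= dgeo m t <= 1.
Proof.
  intros Ht. assert (Hq := one_sub_pow_pos m t Ht m_pos). unfold dgeo.
  destruct m as [|a]; [lia|]. change (pred (S a)) with a.
  assert (Hup := one_sub_pow_le (S a) t ltac:(lra)).
  assert (Hlow := one_sub_pow_ge a t ltac:(lra)).
  assert (Hta : 0 <= t ^ a) by (apply pow_le; lra).
  set (q := 1 - t ^ S a) in *.
  assert (Hnum0 : 0 <= INR (S a) * (1 - t) - t * q).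
  { assert (t * q <= 1 * q) by (apply Rmult_le_compat_r; lra). lra. }
  assert (Hnum1 : INR (S a) * (1 - t) - t * q <= INR (S a) * (1 - t) * q).
  { assert (0 <= t * (q - INR (S a) * t ^ a * (1 - t))) by (apply Rmult_le_pos; lra).
    replace (t * (q - INR (S a) * t ^ a * (1 - t)))
      with (INR (S a) * (1 - t) * q - (INR (S a) * (1 - t) - t * q)) in H
      by (unfold q; rewrite <- tech_pow_Rmult; ring).
    lra. }
  split.
  - apply Rdiv_le_0_compat; [apply Rmult_le_pos | apply pow_lt]; lra.
  - apply Rmult_le_reg_r with (q ^ 2); [apply pow_lt; lra|].
    unfold Rdiv. rewrite Rmult_assoc, Rinv_l, Rmult_1_r by (apply pow_nonzero; lra).
    assert (t ^ a * (INR (S a) * (1 - t) - t * q) <= t ^ a * (INR (S a) * (1 - t) * q))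
      by (apply Rmult_le_compat_l; lra).
    assert (INR (S a) * t ^ a * (1 - t) * q <= q * q) by (apply Rmult_le_compat_r; lra).
    nra.
Qed.

Lemma geo_lipschitz s t : 0 <= s <= t -> t < 1 -> 0 <= geo m t - geo m s <= t - s.
Proof.
  intros Hs Ht. destruct (Req_dec s t) as [-> | Hne]; [lra|].
  destruct (MVT_cor2 (geo m) (dgeo m) s t ltac:(lra)) as [c [Hc Hcr]].
  - intros c Hc. apply is_derive_Reals, is_derive_geo. lra.
  - rewrite Hc. assert (B := dgeo_bounds c ltac:(lra)). split; nra.
Qed.

Lemma one_le_dlogit_gap t : 0 <= t < 1 -> 1 <= dlogit_gap m D t.
Proof.
  intros Ht. unfold dlogit_gap.
  assert (H := geo_lipschitz 0 t ltac:(lra) ltac:(lra)).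
  unfold geo at 2 in H. rewrite pow_i in H by lia.
  assert (0 <= INR D * INR m) by (apply Rmult_le_pos; apply pos_INR).
  assert (0 <= INR D * INR m * geo m t) by (apply Rmult_le_pos; lra).
  lra.
Qed.

Lemma logit_phi t : 0 <= t < 1 -> logit (f t) = INR D * ln (1 - t ^ m).
Proof.
  intros Ht. assert (Hg := odds_pos t Ht).
  assert (Hq := one_sub_pow_pos m t Ht m_pos).
  unfold logit, phi. set (o := g t) in *.
  replace (1 - o / (1 + o)) with (/ (1 + o)) by (field; lra).
  rewrite <- ln_div by (try apply Rdiv_lt_0_compat; try apply Rinv_0_lt_compat; lra).
  rewrite <- ln_pow by lra. f_equal. change ((1 - t ^ m) ^ D) with o. field. lra.
Qed.

Lemma logit_gap_cycle z w : 0 <= z < 1 -> 0 <= w < 1 -> f z = w -> f w = z ->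
  logit_gap m D z + logit_gap m D w = 0.
Proof.
  intros Hz Hw Hzw Hwz. unfold logit_gap.
  rewrite <- (logit_phi z), <- (logit_phi w), Hzw, Hwz by auto. ring.
Qed.

Lemma is_derive_potential p q t : 0 < t < 1 ->
  is_derive (potential m D p q) t ((p * dlog_slope m t - q * dlogit_gap m D t) / (t * (1 - t))).
Proof.
  intros Ht. assert (Hq := one_sub_pow_pos m t ltac:(lra) m_pos).
  assert (Hs := slope_pos t Ht).
  unfold potential, logit_gap, logit, dlog_slope, dlogit_gap, geo. unfold slope in *.
  auto_derive.
  - unfold Rminus, Rdiv in *. repeat split; lra.
  - rewrite (pow_pred m t m_pos) in *.
    assert (INR m <> 0) by (apply not_0_INR; lia).
    assert (INR D <> 0) by (apply not_0_INR; lia).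
    assert (t ^ pred m <> 0) by (apply pow_nonzero; lra).
    unfold Rminus, Rdiv in *. field. repeat split; lra.
Qed.

Lemma dlog_cross_sign x c : 0 < x <= 1/2 -> 0 < c < 1 ->
  (c <= x -> 0 <= dlogit_gap m D x * dlog_slope m c - dlog_slope m x * dlogit_gap m D c) /\
  (x <= c -> dlogit_gap m D x * dlog_slope m c - dlog_slope m x * dlogit_gap m D c <= 0).
Proof.
  intros Hx Hc.
  set (A := dlogit_gap m D x). set (al := INR m - (INR m + 1) * x).
  assert (HA : 1 <= A) by (apply one_le_dlogit_gap; lra).
  (* [x <= 1/2 <= m / (m + 1)] *)
  assert (Hal : 0 <= al).
  { assert (1 <= INR m) by (apply (le_INR 1); lia). unfold al. nra. }
  assert (key : forall s t, 0 <= s <= t -> t < 1 ->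
    0 <= (INR m + 1) * (t - s) * A + INR m * (geo m t - geo m s) * (INR D * al - 1)).
  { intros s t Hs Ht. destruct (geo_lipschitz s t Hs Ht) as [E1 E2].
    assert (HmR := pos_INR m). assert (HDR := pos_INR D).
    assert (0 <= (INR m + 1) * (t - s) * (A - 1)) by (apply Rmult_le_pos; nra).
    assert (0 <= INR m * (geo m t - geo m s) * (INR D * al)) by (apply Rmult_le_pos; nra).
    assert (0 <= INR m * (t - s - (geo m t - geo m s))) by nra.
    nra. }
  replace (A * dlog_slope m c - dlog_slope m x * dlogit_gap m D c)
    with ((INR m + 1) * (x - c) * A + INR m * (geo m x - geo m c) * (INR D * al - 1))
    by (unfold A, al, dlog_slope, dlogit_gap; ring).
  split; intros Hle.
  - apply key; lra.
  - assert (H := key x c ltac:(lra) ltac:(lra)). nra.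
Qed.

Lemma potential_max x t : 0 < x <= 1/2 -> 0 < t < 1 ->
  potential m D (dlogit_gap m D x) (dlog_slope m x) t
  <= potential m D (dlogit_gap m D x) (dlog_slope m x) x.
Proof.
  intros Hx Ht.
  apply (max_of_derive_sign _ (fun c => (dlogit_gap m D x * dlog_slope m c
    - dlog_slope m x * dlogit_gap m D c) / (c * (1 - c))) 0 1 x); auto; [lra|..].
  - intros c Hc. apply is_derive_Reals, is_derive_potential. lra.
  - intros c Hc. apply Rdiv_le_0_compat; [|nra].
    apply (dlog_cross_sign x c Hx ltac:(lra)). lra.
  - intros c Hc. unfold Rdiv. apply Rmult_le_0_r; [|left; apply Rinv_0_lt_compat; nra].
    apply (dlog_cross_sign x c Hx ltac:(lra)). lra.
Qed.

Lemma slope_cycle_le x z w : 0 < x <= 1/2 -> f x = x ->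
  0 < z < 1 -> 0 < w < 1 -> f z = w -> f w = z ->
  slope m D z * slope m D w <= slope m D x * slope m D x.
Proof.
  intros Hx Hfx Hz Hw Hzw Hwz.
  assert (Hmz := potential_max x z Hx Hz). assert (Hmw := potential_max x w Hx Hw).
  assert (Gzw := logit_gap_cycle z w ltac:(lra) ltac:(lra) Hzw Hwz).
  assert (Gxx := logit_gap_cycle x x ltac:(lra) ltac:(lra) Hfx Hfx).
  assert (Hp := one_le_dlogit_gap x ltac:(lra)).
  assert (Cz := slope_pos z Hz). assert (Cw := slope_pos w Hw).
  assert (Cx := slope_pos x ltac:(lra)).
  unfold potential in Hmz, Hmw.
  assert (Hln : ln (slope m D z * slope m D w) <= ln (slope m D x * slope m D x)).
  { rewrite !ln_mult by lra. apply Rmult_le_reg_l with (dlogit_gap m D x); [lra|]. nra. }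
  destruct (Rle_or_lt (slope m D z * slope m D w) (slope m D x * slope m D x)) as [Hle | Hlt];
    [exact Hle|].
  apply ln_increasing in Hlt; [lra | nra].
Qed.

Lemma derivable_pt_lim_phi_twice t : 0 <= t <= 1 ->
  derivable_pt_lim (fun s => f (f s) - s) t (Derive f t * Derive f (f t) - 1).
Proof.
  intros Ht. apply is_derive_Reals.
  assert (Hft := phi_range t Ht).
  apply (is_derive_minus _ _ t _ _ (is_derive_comp f f t _ _
    (Derive_correct _ _ (ex_derive_phi (f t) ltac:(lra)))
    (Derive_correct _ _ (ex_derive_phi t Ht))) (is_derive_id t)).
Qed.

Lemma phi_twice_fixed_unique x : 0 <= x <= 1 -> f x = x -> slope m D x < 1 ->
  forall z, 0 <= z <= 1 -> f (f z) = z -> z = x.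
Proof.
  intros Hx Hfx Hslope z Hz Hzz.
  assert (Hx' := phi_fixed_bounds x Hx Hfx).
  assert (Cx := slope_pos x ltac:(lra)).
  apply (zero_unique_of_derive_neg (fun s => f (f s) - s) 0 1); auto; [..| lra | rewrite !Hfx; lra].
  - intros t Ht. apply derivable_continuous_pt. eexists.
    exact (derivable_pt_lim_phi_twice t Ht).
  - intros y Hy Hyy. exists (Derive f y * Derive f (f y) - 1).
    split; [| exact (derivable_pt_lim_phi_twice y Hy)].
    assert (Hw := phi_range y Hy).
    set (w := f y) in *.
    assert (Hwy : f w = y) by lra.
    (* [f] maps [0,1] into [0,1/2] and only [1] to [0], so the cycle avoids [0] and [1] *)
    assert (Hy0 : 0 < y) by (rewrite <- Hwy; apply phi_pos; lra).
    assert (Hy1 : y <= 1/2) by (rewrite <- Hwy; apply phi_range; lra).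
    assert (Hw0 : 0 < w) by (apply phi_pos; lra).
    rewrite (Derive_phi_cycle y w) by (auto; lra).
    assert (slope m D y * slope m D w <= slope m D x * slope m D x)
      by (apply slope_cycle_le; auto; lra).
    nra.
Qed.
End PhiMap.

Theorem lemma56 (k Delta : nat) (hk : (2 <= k)%nat) (hD : (2 <= Delta)%nat) :
  (forall a b : R, 0 <= a -> a < b -> b <= 1 -> f56 k Delta b < f56 k Delta a) /\
  exists x : R,
    (0 <= x <= 1 /\ f56 k Delta x = x) /\
    (forall y : R, 0 <= y <= 1 -> f56 k Delta y = y -> y = x) /\
    ex_derive (f56 k Delta) x /\
    Rabs (Derive (f56 k Delta) x) =
      (INR (Delta - 1) * INR (k - 1) * x ^ (k - 1) * (1 - x)) / (1 - x ^ (k - 1)) /\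
    (Rabs (Derive (f56 k Delta) x) < 1 ->
       forall z : R, 0 <= z <= 1 -> f56 k Delta (f56 k Delta z) = z -> z = x).
Proof.
  assert (Hm : (0 < k - 1)%nat) by lia. assert (HD : (0 < Delta - 1)%nat) by lia.
  change (f56 k Delta) with (phi (k - 1) (Delta - 1)).
  generalize (k - 1)%nat (Delta - 1)%nat Hm HD. clear. intros m D Hm HD.
  split; [exact (phi_decr m D Hm HD)|].
  destruct (phi_fixed_exists m D Hm HD) as [x [Hx Hfx]].
  assert (Hx' := phi_fixed_bounds m D Hm HD x Hx Hfx).
  assert (Hslope : Rabs (Derive (phi m D) x) = slope m D x).
  { rewrite (Derive_phi_fixed m D Hm HD x), Rabs_Ropp by (auto; lra).
    apply Rabs_pos_eq, Rlt_le, (slope_pos m D Hm HD); lra. }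
  exists x. split; [auto|].
  split; [intros y Hy Hfy; exact (phi_fixed_unique m D Hm HD x y Hx Hy Hfx Hfy)|].
  split; [exact (ex_derive_phi m D x Hx)|].
  split; [exact Hslope|].
  rewrite Hslope. exact (phi_twice_fixed_unique m D Hm HD x Hx Hfx).
Qed.
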